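(* Let $\sigma_X=(\sigma_X^0,\sigma_X[\cdot,\cdot])$ be a memory-one strategy for $X$ and $\sigma_Y$ any behavioral strategy for $Y$, generating the measures $\nu_t$. Then for every measurable $E\subseteq S_X$, $$\sum_{t=0}^\infty\lambda^t\int_{S_X\times S_Y}\Big[\mathbf{1}_E(x)-\lambda\,\sigma_X[x,y](E)\Big]\,d\nu_t(x,y)=\sigma_X^0(E).$$
   Context: Standing framework. Let $S_X,S_Y$ be measurable spaces, and $\lambda\in(0,1)$. For $T\ge 0$ let $\mathcal{H}^T=(S_X\times S_Y)^T$ ($\mathcal{H}^0=\{\varnothing\}$) and $\mathcal{H}=\bigsqcup_{T\ge0}\mathcal{H}^T$. A behavioral strategy for $X$ (resp. $Y$) is a Markov kernel from $\mathcal{H}$ to $S_X$ (resp. $S_Y$). A memory-one strategy for $X$ is a behavioral strategy determined by a probability measure $\sigma_X^0$ on $S_X$ (used at the empty history) and a Markov kernel $(x,y)\mapsto\sigma_X[x,y]$ from $S_X\times S_Y$ to $S_X$, with $\sigma_X[h^T]=\sigma_X[x_{T-1},y_{T-1}]$ for $h^T=((x_0,y_0),\dots,(x_{T-1},y_{T-1}))$, $T\ge1$. Given behavioral strategies $\sigma_X,\sigma_Y$, put $\sigma(h)=\sigma_X[h]\otimes\sigma_Y[h]$ and define probability measures $\mu_t$ on $\mathcal{H}^{t+1}$ by $\mu_0=\sigma(\varnothing)$ and $\mu_t(E'\times E)=\int_{E'}\sigma(h)(E)\,d\mu_{t-1}(h)$ (uniquely extended). Let $\nu_t(E)=\mu_t(\mathcal{H}^t\times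 E)$ be the distribution of the action pair at time $t$. $\mathbf{1}_E$ denotes the indicator of $E$. *)

From HB Require Import structures.
From mathcomp Require Import all_boot all_order all_algebra.
From mathcomp Require Import all_classical all_reals all_analysis.
Unset Printing Implicit Defensive.
Import Order.TTheory GRing.Theory Num.Theory.
Local Open Scope classical_set_scope.
Local Open Scope ring_scope.
Local Open Scope ereal_scope.

Section Game.
Context {d1 d2 : measure_display} (SX : measurableType d1) (SY : measurableType d2)
  (R : realType).

(* H^T = (S_X x S_Y)^T, built as ((unit * (SX*SY)) * (SX*SY)) * ... ,
   with the product sigma-algebras; H^0 = unit (the empty history). *)
Fixpoint hist (T : nat) : {d : measure_display & measurableType d} :=
  match T with
  | 0 => existT measurableType _ (unit : measurableType _)
  | S n => existT measurableType _
      ((projT2 (hist n) * (SX * SY))%type : measurableType _)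
  end.

Definition H (T : nat) : measurableType (projT1 (hist T)) := projT2 (hist T).

(* the memory-one behavioral strategy determined by sigma_X^0 and sigma_X[.,.]:
   at the empty history use s0, at h^T (T >= 1) use k at the last action pair *)
Definition memory_one (s0 : probability SX R) (k : R.-pker (SX * SY) ~> SX) :
    forall T, H T -> set SX -> \bar R :=
  fun T => match T return H T -> set SX -> \bar R with
           | 0 => fun _ => s0
           | S n => fun h => k h.2
           end.

Variables (sX : forall T, H T -> set SX -> \bar R)
          (sY : forall T, H T -> set SY -> \bar R).

(* sigma(h) = sigma_X[h] (x) sigma_Y[h], the product measure on S_X x S_Y,
   written as the iterated integral (product of two probability measures). *)
Definition sigma T (h : H T) (A : set (SX * SY)) : \bar R :=
  \int[sX T h]_x sY T h [set y | A (x, y)].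

(* mu_t on H^{t+1}: mu_0 = sigma(empty), mu_t(A) = int sigma(h)(A_h) dmu_{t-1}(h)
   (this is the unique extension of mu_t(E' x E) = int_{E'} sigma(h)(E) dmu_{t-1}) *)
Fixpoint mu (t : nat) : set (H t.+1) -> \bar R :=
  match t return set (H t.+1) -> \bar R with
  | 0 => fun A => sigma 0 (tt : H 0) [set a | A (tt, a)]
  | S n => fun A => \int[mu n]_h sigma n.+1 h [set a | A (h, a)]
  end.

Definition nu (t : nat) (E : set (SX * SY)) : \bar R :=
  mu t [set p | E p.2].

End Game.

From Pilot Require Import Defs.
From HB Require Import structures.
From mathcomp Require Import all_boot all_order all_algebra.
From mathcomp Require Import all_classical all_reals all_analysis.
From mathcomp Require Import measurable_realfun ring.
Import numFieldNormedType.Exports HBNNSimple.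
Import Order.TTheory GRing.Theory Num.Theory.
Local Open Scope classical_set_scope.
Local Open Scope ring_scope.

(* Let a_t be the probability that X's action at time t lies in E.  Under a
   memory-one strategy, the action at time t+1 is drawn from sigma_X[x_t, y_t],
   so the integral of sigma_X[x, y](E) against nu_t is a_{t+1}, while that of
   1_E(x) is a_t.  The t-th term of the series is therefore
   lambda^t (a_t - lambda a_{t+1}), the partial sums telescope to
   a_0 - lambda^n a_n, and a_0 = sigma_X^0(E). *)

Lemma discounted_telescope (R : comPzRingType) (u : nat -> R) (lam : R) n :
  \sum_(0 <= t < n) lam ^+ t * (u t - lam * u t.+1) = u 0 - lam ^+ n * u n.
Proof.
elim: n => [|n IH]; first by rewrite big_geq// expr0 mul1r subrr.
by rewrite big_nat_recr//= IH exprS; ring.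
Qed.

Lemma cvg_discounted_telescope (R : realType) (u : nat -> R) (lam c : R) :
  0 <= lam < 1 -> (forall n, `|u n| <= c) ->
  (fun n => \sum_(0 <= t < n) lam ^+ t * (u t - lam * u t.+1)) @ \oo --> u 0.
Proof.
move=> /andP[lam0 lam1] uc.
rewrite (_ : (fun n => _) = fun n => u 0 - lam ^+ n * u n); last first.
  by apply/funext => n; rewrite discounted_telescope.
rewrite -[X in _ --> X]subr0; apply: cvgB; first exact: cvg_cst.
apply: norm_cvg0.
apply: (@squeeze_cvgr _ _ _ _ (fun=> 0) (fun n => c * lam ^+ n)).
- near=> n; rewrite normr_ge0/= normrM mulrC normrX (ger0_norm lam0).
  by apply: ler_wpM2r; [exact: exprn_ge0|exact: uc].
- exact: cvg_cst.
- rewrite -[X in _ --> X](mulr0 c); apply: cvgMr.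
  by apply: cvg_expr; rewrite ger0_norm.
Unshelve. all: by end_near.
Qed.

Section kprecomp.
Context {d0 d1 d2} {T0 : measurableType d0} {T1 : measurableType d1}
  {T2 : measurableType d2} {R : realType} {f : T0 -> T1} (k : R.-pker T1 ~> T2).

Definition kprecomp (mf : measurable_fun setT f) :
  T0 -> {measure set T2 -> \bar R} := k \o f.

Hypothesis mf : measurable_fun setT f.

Let measurable_kprecomp U : measurable U ->
  measurable_fun setT (kprecomp mf ^~ U).
Proof. by move=> mU; apply: (measurableT_comp (measurable_kernel k _ mU)). Qed.

HB.instance Definition _ := isKernel.Build _ _ _ _ _ (kprecomp mf)
  measurable_kprecomp.

Let kprecomp_prob x : kprecomp mf x setT = 1%E.
Proof. exact: prob_kernel. Qed.

HB.instance Definition _ := Kernel_isProbability.Build _ _ _ _ _ (kprecomp mf)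
  kprecomp_prob.

End kprecomp.

Section pkproduct.
Context {d0 d1 d2} {T0 : measurableType d0} {T1 : measurableType d1}
  {T2 : measurableType d2} {R : realType}
  (k1 : R.-pker T0 ~> T1) (k2 : R.-pker (T0 * T1) ~> T2).

Definition pkproduct : T0 -> {measure set (T1 * T2) -> \bar R} :=
  mkproduct k1 k2.

HB.instance Definition _ := isKernel.Build _ _ _ _ _ pkproduct
  (measurable_kproduct k1 k2).

Lemma pkproductE x A : measurable A ->
  pkproduct x A = (\int[k1 x]_y k2 (x, y) (xsection A y))%E.
Proof.
move=> mA; apply: eq_integral => y _.
rewrite /kernel.intker_indic integral_indic//=; last first.
  by rewrite -[X in measurable X]xsectionE; exact: measurable_xsection.
by rewrite setIT xsectionE.
Qed.

Let pkproduct_prob x : pkproduct x setT = 1%E.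
Proof.
rewrite pkproductE//.
under eq_integral do rewrite xsectionE preimage_setT prob_kernel.
by rewrite integral_cst//= mul1e prob_kernel.
Qed.

HB.instance Definition _ := Kernel_isProbability.Build _ _ _ _ _ pkproduct
  pkproduct_prob.

End pkproduct.

Lemma prob_kernel_le1 {d d'} {X : measurableType d} {Y : measurableType d'}
    {R : realType} (k : R.-pker X ~> Y) x B :
  measurable B -> (k x B <= 1)%E.
Proof. by move=> mB; rewrite -(@prob_kernel _ _ _ _ _ k x) le_measure ?inE. Qed.

Lemma bounded_integrable {d} {T : measurableType d} {R : realType}
    (m : {measure set T -> \bar R}) (f : T -> \bar R) (c : R) :
  (m setT < +oo)%E -> measurable_fun setT f -> (forall x, `|f x| <= c%:E)%E ->
  m.-integrable setT f.
Proof.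
move=> mfin mf fc; apply/integrableP; split => //.
apply: (@le_lt_trans _ _ (\int[m]_(x in setT) c%:E)%E).
  by apply: ge0_le_integral => //; exact: measurableT_comp.
by rewrite (integral_cst m measurableT) ltey_eq fin_numM// ge0_fin_numE.
Qed.

(* Unlike [eq_measure_integral], neither set function needs to be a measure. *)
Lemma eq_setfun_integral {d} {T : measurableType d} {R : realType}
    {m1 m2 : set T -> \bar R} {D} {f : T -> \bar R} :
  (forall A, measurable A -> m1 A = m2 A) ->
  (\int[m1]_(x in D) f x = \int[m2]_(x in D) f x)%E.
Proof.
move=> m12; rewrite /integral; congr (_ - _)%E; congr ereal_sup.
all: apply/seteqP; split => _ [g gf <-]; exists g => //.
all: apply: eq_fsbigr => r _; rewrite m12//.
all: exact: measurable_funPTI g (measurable_set1 r).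
Qed.

Section memory_one_game.
Context {d1 d2 : measure_display} {SX : measurableType d1}
  {SY : measurableType d2} {R : realType}
  (s0 : probability SX R) (k : R.-pker (SX * SY) ~> SX)
  (sY : forall T, R.-pker (H SX SY T) ~> SY).

Local Notation sX := (memory_one SX SY R s0 k).
Local Notation sigma := (sigma SX SY R sX (fun T h => sY T h)).
Local Notation mu := (mu SX SY R sX (fun T h => sY T h)).
Local Notation nu := (nu SX SY R sX (fun T h => sY T h)).

Definition memory_one_kernel T : R.-pker (H SX SY T) ~> SX :=
  match T return R.-pker (H SX SY T) ~> SX with
  | 0 => kprobability (measurable_cst (s0 : pprobability SX R))
  | S n => kprecomp k (@measurable_snd _ _ (H SX SY n) _)
  end.

Definition sigma_kernel T : R.-pker (H SX SY T) ~> (SX * SY)%type :=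
  pkproduct (memory_one_kernel T) (kprecomp (sY T) measurable_fst).

Definition hist_step T (P : R.-pker unit ~> H SX SY T) :
    R.-pker unit ~> H SX SY T.+1 :=
  pkproduct P (kprecomp (sigma_kernel T) measurable_snd).

(* mu_t is a measure on H^{t+1}; it is encoded as a probability kernel from
   the one-point space so that [pkproduct] can extend it by sigma_kernel. *)
Fixpoint hist_kernel t : R.-pker unit ~> H SX SY t.+1 :=
  match t with
  | 0 => hist_step 0
           (kprobability (measurable_cst (\d_tt : pprobability unit R)))
  | S n => hist_step n.+1 (hist_kernel n)
  end.

Lemma memory_oneE T h : sX T h = memory_one_kernel T h.
Proof. by case: T h. Qed.

Lemma sigmaE T h B : measurable B -> sigma T h B = sigma_kernel T h B.
Proof.
move=> mB; rewrite /sigma_kernel pkproductE// /Defs.sigma memory_oneE.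
by apply: eq_integral => x _; rewrite xsectionE.
Qed.

Lemma hist_kernelS t A : measurable A ->
  hist_kernel t.+1 tt A =
  (\int[hist_kernel t tt]_h sigma_kernel t.+1 h (xsection A h))%E.
Proof. exact: pkproductE. Qed.

Lemma muS t A :
  mu t.+1 A = (\int[mu t]_h sigma t.+1 h [set a | A (h, a)])%E.
Proof. by []. Qed.

Lemma muE t A : measurable A -> mu t A = hist_kernel t tt A.
Proof.
elim: t A => [|t IH] A mA.
  rewrite [RHS]pkproductE//.
  rewrite (eq_integral (cst (sigma_kernel 0 tt (xsection A tt)))); last by case.
  rewrite integral_cst// prob_kernel mule1 -sigmaE.
    by rewrite xsectionE.
  exact: measurable_xsection.
rewrite hist_kernelS// -(eq_setfun_integral IH).
rewrite muS; congr integral; apply/funext => h.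
rewrite -sigmaE; last exact: measurable_xsection.
by rewrite xsectionE.
Qed.

Lemma integral_nu t (f : SX * SY -> \bar R) : measurable_fun setT f ->
    (hist_kernel t tt).-integrable setT (f \o snd) ->
  (\int[nu t]_p f p = \int[hist_kernel t tt]_h f h.2)%E.
Proof.
move=> mf intf.
rewrite (eq_setfun_integral (m2 := pushforward (hist_kernel t tt) snd)).
  by rewrite integral_pushforward// preimage_setT.
move=> B mB; rewrite /nu muE//.
by rewrite -[X in measurable X]setTI; exact: measurable_snd.
Qed.

Variables (E : set SX) (mE : measurable E).

Definition actX_in t : set (H SX SY t.+1) := [set h | E h.2.1].

Lemma measurable_actX_in t : measurable (actX_in t).
Proof.
rewrite (_ : actX_in t = setT `*` (E `*` setT)); last first.
  by apply/seteqP; split => [h Eh|h [_ []]].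
by apply: measurableX => //; exact: measurableX.
Qed.

Lemma sigma_kernelX T h :
  sigma_kernel T h (E `*` setT) = memory_one_kernel T h E.
Proof.
rewrite pkproductE; last exact: measurableX.
transitivity (\int[memory_one_kernel T h]_x (\1_E x)%:E)%E.
  2: by rewrite integral_indic// setIT.
apply: eq_integral => x _.
rewrite indicE; have [xE|xE] := boolP (x \in E).
  by rewrite in_xsectionX// prob_kernel.
by rewrite notin_xsectionX// measure0.
Qed.

Lemma hist_kernel_actX0 : hist_kernel 0 tt (actX_in 0) = s0 E.
Proof.
rewrite -muE; last exact: measurable_actX_in.
transitivity (sigma 0 tt (E `*` setT)).
  by congr (sigma 0 tt _); apply/seteqP; split => [y|y []].
by rewrite sigmaE ?sigma_kernelX//; exact: measurableX.
Qed.

Lemma hist_kernel_actXS t :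
  hist_kernel t.+1 tt (actX_in t.+1) = (\int[hist_kernel t tt]_h k h.2 E)%E.
Proof.
rewrite hist_kernelS; last exact: measurable_actX_in.
apply: eq_integral => h _; rewrite -[RHS](sigma_kernelX t.+1 h).
rewrite (_ : xsection _ h = E `*` setT)//.
by rewrite xsectionE; apply/seteqP; split => [y|y []].
Qed.

Lemma hist_kernel_integrable t (g : SX * SY -> \bar R) (c : R) :
    measurable_fun setT g -> (forall p, (`|g p| <= c%:E)%E) ->
  (hist_kernel t tt).-integrable setT (g \o snd).
Proof.
move=> mg gc; apply: (bounded_integrable _ _ c) => //.
- by rewrite prob_kernel ltry.
- exact: measurableT_comp.
- by move=> h; exact: gc.
Qed.

Definition prob_actX_in t : R := fine (hist_kernel t tt (actX_in t)).

Lemma prob_actX_inE t : hist_kernel t tt (actX_in t) = (prob_actX_in t)%:E.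
Proof.
rewrite fineK// ge0_fin_numE// (le_lt_trans (prob_kernel_le1 _ _ _ _)) ?ltry//.
exact: measurable_actX_in.
Qed.

Lemma prob_actX_in_le1 t : `|prob_actX_in t| <= 1.
Proof.
have := prob_kernel_le1 (hist_kernel t) tt _ (measurable_actX_in t).
by rewrite prob_actX_inE lee_fin ger0_norm// -lee_fin -prob_actX_inE.
Qed.

Lemma integral_nu_series_term t (lam : R) : 0 <= lam <= 1 ->
  (\int[nu t]_p ((\1_E p.1)%:E - lam%:E * k p E) =
   (prob_actX_in t - lam * prob_actX_in t.+1)%:E)%E.
Proof.
move=> /andP[lam0 lam1].
have mind : measurable_fun setT (fun p : SX * SY => (\1_E p.1)%:E : \bar R).
  by apply/measurable_EFinP; apply: measurableT_comp.
have mk : measurable_fun setT (fun p : SX * SY => k p E).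
  exact: measurable_kernel.
have mkl : measurable_fun setT (fun p : SX * SY => lam%:E * k p E)%E.
  exact: measurable_funeM.
have ind1 p : (`|(\1_E p.1)%:E| <= 1%:E)%E.
  by rewrite lee_fin indicE; case: (p.1 \in E); rewrite ?normr1 ?normr0.
have kl1 p : (`|lam%:E * k p E| <= 1%:E)%E.
  rewrite gee0_abs ?mule_ge0 ?lee_fin// -[1%:E]mule1.
  by apply: lee_pmul; rewrite ?lee_fin// prob_kernel_le1.
have k1 p : (`|k p E| <= 1%:E)%E by rewrite gee0_abs// prob_kernel_le1.
rewrite integral_nu; first last.
- apply: (hist_kernel_integrable _ _ 2) => [|p]; first exact: emeasurable_funB.
  by rewrite (le_trans (lee_abs_sub _ _))// -[2%R]/(1 + 1)%R EFinD leeD.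
- exact: emeasurable_funB.
rewrite integralB//; last first.
- exact: (hist_kernel_integrable _ _ 1 mkl).
- exact: (hist_kernel_integrable _ _ 1 mind).
rewrite integralZl//; last exact: (hist_kernel_integrable _ _ 1 mk).
rewrite -hist_kernel_actXS EFinB EFinM -!prob_actX_inE.
rewrite (eq_integral (fun h => (\1_(actX_in t) h)%:E))//.
by rewrite integral_indic ?setIT//; exact: measurable_actX_in.
Qed.
End memory_one_game.

Theorem lemma3 (d1 d2 : measure_display) (SX : measurableType d1)
  (SY : measurableType d2) (R : realType) (lam : R)
  (hlam0 : 0 < lam) (hlam1 : lam < 1)
  (s0 : probability SX R) (k : R.-pker (SX * SY) ~> SX)
  (sY : forall T, R.-pker (H SX SY T) ~> SY)
  (E : set SX) (mE : measurable E) :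
  (fun n : nat => \sum_(0 <= t < n)
     ((lam ^+ t)%:E *
      \int[nu SX SY R (memory_one SX SY R s0 k)
                 (fun T h => sY T h) t]_p
         ((\1_E p.1)%:E - lam%:E * k p E))%E)
  @ \oo --> s0 E.
Proof.
pose u := prob_actX_in s0 k sY E.
have lam01 : 0 <= lam <= 1 by rewrite !ltW.
rewrite (_ : (fun n : nat => _) = fun n =>
    (\sum_(0 <= t < n) lam ^+ t * (u t - lam * u t.+1))%:E); last first.
  apply/funext => n; rewrite -sumEFin; apply: eq_bigr => t _.
  by rewrite (integral_nu_series_term _ _ _ _ mE)// EFinM.
rewrite -(hist_kernel_actX0 s0 k sY E mE) (prob_actX_inE _ _ _ _ mE) -/(u 0).
apply: cvg_EFin; first by near=> n.
apply: (cvg_discounted_telescope _ _ _ 1); first by rewrite ltW.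
exact: prob_actX_in_le1 mE.
Unshelve. all: by end_near.
Qed.
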